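(* Let $\mathbf A$ be a finite subdirectly irreducible cBCK-algebra of height $n=\mathrm{h}(\mathbf A)$, let $k$ be a divisor of $n$ with $k\neq 1$ and $k\neq n$, and let $A_k=\{x\in A \mid k \text{ divides } \mathrm{h}(x)\}$. Then $A_k\cup \mathrm{m}(\mathbf A)$ is the universe of a subalgebra of $\mathbf A$ if and only if $\mathrm{b}(\mathbf A)\subseteq A_k$ and $\mathrm{m}(\mathbf A)\subseteq A_k$.
   Context: A BCK-algebra is an algebra $(A,\ominus,0)$ of type $(2,0)$ satisfying $((x\ominus y)\ominus(x\ominus z))\ominus(z\ominus y)=0$, $x\ominus 0=x$, $0\ominus x=0$, and ($x\ominus y=0$ and $y\ominus x=0$ imply $x=y$); it is ordered by $x\le y$ iff $x\ominus y=0$. A cBCK-algebra is a BCK-algebra satisfying $x\ominus(x\ominus y)=y\ominus(y\ominus x)$; its order is a meet-semilattice with $x\wedge y=x\ominus(x\ominus y)$. Finite subdirectly irreducible cBCK-algebras are, as posets, rooted trees with root $0$ (with a unique atom if nontrivial). For $a\in A$, the height is $\mathrm{h}(a)=|[0,a]|-1$, and $\mathrm{h}(\mathbf A)=\sup\{\mathrm{h}(a)\mid a\in A\}$. $\mathrm{m}(\mathbf A)$ is the set of maximal elements of $\mathbf A$. $\mathrm{b}(\mathbf A)$ is the set of branching elements: $b\in\mathrm{b}(\mathbf A)$ iff there exist $c,d\in A$ with $c,d>b$ and $c\wedge d=b$. *)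

From mathcomp Require Import all_boot.
Set Implicit Arguments. Unset Strict Implicit. Unset Printing Implicit Defensive.

Section BCK.
Variables (T : finType) (op : T -> T -> T) (z : T).

Definition is_BCK : Prop :=
  [/\ forall x y w, op (op (op x y) (op x w)) (op w y) = z,
      forall x, op x z = x,
      forall x, op z x = z &
      forall x y, op x y = z -> op y x = z -> x = y].

Definition is_cBCK : Prop :=
  is_BCK /\ forall x y, op x (op x y) = op y (op y x).

Definition ble (x y : T) : bool := op x y == z.
Definition blt (x y : T) : bool := (x != y) && ble x y.
Definition bmeet (x y : T) : T := op x (op x y).

(* congruences of the algebra (T, op, z) (0 is a constant, so only op matters) *)
Definition is_congruence (r : rel T) : Prop :=
  [/\ reflexive r, symmetric r, transitive r &
      forall x x' y y', r x x' -> r y y' -> r (op x y) (op x' y')].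

Definition subdirectly_irreducible : Prop :=
  1 < #|T| /\
  exists mu : rel T, is_congruence mu /\ (exists x y, mu x y /\ x <> y) /\
    forall th : rel T, is_congruence th -> (exists x y, th x y /\ x <> y) ->
      forall x y, mu x y -> th x y.

Definition height (a : T) : nat := #|[pred x | ble z x && ble x a]| - 1.
Definition alg_height : nat := \max_(a : T) height a.

Definition maximals : {set T} := [set x | [forall y, ble x y ==> (y == x)]].
Definition branching : {set T} :=
  [set b | [exists c, exists d, [&& blt b c, blt b d & bmeet c d == b]]].

Definition Ak (k : nat) : {set T} := [set x | k %| height x].

Definition is_subuniverse (S : {set T}) : Prop :=
  z \in S /\ forall x y, x \in S -> y \in S -> op x y \in S.

End BCK.

From mathcomp Require Import all_boot zify.
Set Implicit Arguments. Unset Strict Implicit. Unset Printing Implicit Defensive.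

(* A finite subdirectly irreducible cBCK-algebra has a unique atom, so every
   interval [0, a] is a chain and h(a - t) = h(a) - h(t) for t <= a; hence
   h(x - y) = h(x) - h(x /\ y), where x /\ y is x, y or a branching element.
   This gives the implication from right to left. Conversely, if [A_k] together
   with the maximal elements is closed under [-], a maximal m with k not
   dividing h(m) would produce a non-maximal element of height strictly between
   0 and k; and a branching b is the meet of two maximal elements c, d, so
   h(c - d) = h(c) - h(b) forces k to divide h(b). *)

Section CBCKAlgebra.
Variables (T : finType) (op : T -> T -> T) (z : T).
Hypothesis cbck : is_cBCK op z.

Local Notation le := (ble op z).
Local Notation meet := (bmeet op).
Local Notation h := (height op z).

Lemma bck_law x y w : op (op (op x y) (op x w)) (op w y) = z.
Proof. by case: cbck => -[->]. Qed.

Lemma opx0 x : op x z = x.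
Proof. by case: cbck => -[_ ->]. Qed.

Lemma op0x x : op z x = z.
Proof. by case: cbck => -[_ _ ->]. Qed.

Lemma bck_antisym x y : op x y = z -> op y x = z -> x = y.
Proof. by case: cbck => -[_ _ _ antisym] _; apply: antisym. Qed.

Lemma meetC x y : meet x y = meet y x.
Proof. by case: cbck => _; rewrite /bmeet => ->. Qed.

Lemma opxx x : op x x = z.
Proof. by have := bck_law x z z; rewrite !opx0. Qed.

Lemma ble_refl x : le x x.
Proof. by rewrite /ble opxx. Qed.

Lemma ble0x x : le z x.
Proof. by rewrite /ble op0x. Qed.

Lemma ble_anti x y : le x y -> le y x -> x = y.
Proof. by move=> /eqP lexy /eqP leyx; apply: bck_antisym. Qed.

Lemma ble0E x : le x z -> x = z.
Proof. by move/ble_anti; apply; apply: ble0x. Qed.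

Lemma ble_trans x y w : le x y -> le y w -> le x w.
Proof.
rewrite /ble => /eqP lexy /eqP leyw.
by have := bck_law x w y; rewrite lexy leyw !opx0 => ->.
Qed.

Lemma ble_op2 x y w : le x y -> le (op w y) (op w x).
Proof. by rewrite /ble => /eqP lexy; have := bck_law w y x; rewrite lexy opx0 => ->. Qed.

Lemma ble_op1 x y w : le x y -> le (op x w) (op y w).
Proof. by rewrite /ble => /eqP lexy; have := bck_law x w y; rewrite lexy opx0 => ->. Qed.

Lemma ble_opl x y : le (op x y) x.
Proof. by have := ble_op2 x (ble0x y); rewrite opx0. Qed.

Lemma ble_meetl x y : le (meet x y) x.
Proof. exact: ble_opl. Qed.

Lemma ble_meetr x y : le (meet x y) y.
Proof. by rewrite /ble; have := bck_law x z y; rewrite !opx0 => ->. Qed.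

Lemma opAC x y w : op (op x y) w = op (op x w) y.
Proof.
have exch a b c : le (op (op a b) c) (op (op a c) b).
  by apply: ble_trans (ble_op2 (op a b) (ble_meetr a c)) _; rewrite /ble bck_law.
by apply: ble_anti; apply: exch.
Qed.

Lemma ble_op_swap x y w : le (op x y) w -> le (op x w) y.
Proof. by rewrite /ble opAC. Qed.

Lemma meet_idPl x y : le x y -> meet x y = x.
Proof. by move=> /eqP lexy; rewrite /bmeet lexy opx0. Qed.

Lemma meet_idPr x y : le y x -> meet x y = y.
Proof. by rewrite meetC; apply: meet_idPl. Qed.

Lemma ble_meet w x y : le w x -> le w y -> le w (meet x y).
Proof.
move=> lewx lewy; have := ble_op2 x (ble_op2 x lewy).
by rewrite -/(bmeet op x w) meet_idPr.
Qed.

Lemma opK a t : le t a -> op a (op a t) = t.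
Proof. exact: meet_idPr. Qed.

Lemma op_meet x y : op x y = op x (meet x y).
Proof. by rewrite /bmeet opK // ble_opl. Qed.

Definition ideal (I : pred T) := I z /\ forall t u, I (op t u) -> I u -> I t.

Lemma ideal_ble I t u : ideal I -> I u -> le t u -> I t.
Proof. by case=> I0 closedI Iu /eqP letu; apply: (closedI t u); rewrite // letu. Qed.

Lemma ideal_congruence I :
  ideal I -> is_congruence op (fun x y => I (op x y) && I (op y x)).
Proof.
move=> idI; have [I0 closedI] := idI.
have trI x y w : I (op x y) -> I (op y w) -> I (op x w).
  move=> Ixy Iyw; apply: (closedI _ (op x y)) Ixy.
  by apply: (ideal_ble idI Iyw); rewrite /ble bck_law.
have op1I a b c : I (op a b) -> I (op (op a c) (op b c)).
  by move=> Iab; apply: (ideal_ble idI Iab); apply: ble_op_swap; rewrite /ble bck_law.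
have op2I a b c : I (op b c) -> I (op (op a c) (op a b)).
  by move=> Ibc; apply: (ideal_ble idI Ibc); rewrite /ble bck_law.
split.
- by move=> x; rewrite opxx I0.
- by move=> x y; rewrite andbC.
- move=> y x w /andP[Ixy Iyx] /andP[Iyw Iwy].
  by rewrite (trI _ _ _ Ixy Iyw) (trI _ _ _ Iwy Iyx).
- move=> x x' y y' /andP[Ixx' Ix'x] /andP[Iyy' Iy'y].
  by rewrite (trI _ (op x' y) _ (op1I _ _ _ Ixx') (op2I _ _ _ Iy'y))
             (trI _ (op x' y) _ (op2I _ _ _ Iyy') (op1I _ _ _ Ix'x)).
Qed.

Definition down a : {set T} := [set s | le s a].

Lemma heightE a : h a = #|down a| - 1.
Proof. by congr (_ - _); apply: eq_card => s; rewrite !inE ble0x. Qed.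

Lemma card_down_gt0 a : 0 < #|down a|.
Proof. by apply/card_gt0P; exists a; rewrite inE ble_refl. Qed.

Lemma height_le s t : le s t -> h s <= h t.
Proof.
move=> lest; rewrite !heightE leq_sub2r //; apply: subset_leq_card.
by apply/subsetP => x; rewrite !inE => /ble_trans; apply.
Qed.

Lemma height_lt s t : le s t -> s != t -> h s < h t.
Proof.
move=> lest neqst; have : down s \proper down t.
  apply/properP; split; first by apply/subsetP => x; rewrite !inE => /ble_trans; apply.
  exists t; rewrite !inE ?ble_refl //.
  by apply: contra neqst => lets; apply/eqP/ble_anti.
by move/proper_card; rewrite !heightE; have := card_down_gt0 s; lia.
Qed.

Lemma ble_eq_height s t : le s t -> h t <= h s -> s = t.
Proof.
move=> lest; case: (eqVneq s t) => // neqst.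
by rewrite leqNgt height_lt.
Qed.

Lemma height0 : h z = 0.
Proof.
rewrite heightE (_ : down z = [set z]) ?cards1 //.
by apply/setP => s; rewrite !inE; apply/idP/eqP => [/ble0E | ->]; rewrite ?ble_refl.
Qed.

Lemma height_gt0 t : t != z -> 0 < h t.
Proof. by move=> nzt; rewrite -height0 height_lt ?ble0x // eq_sym. Qed.

Definition atom e := e != z /\ forall t, le t e -> t = z \/ t = e.

Lemma exists_atom w : w != z -> exists2 e, atom e & le e w.
Proof.
move=> nzw; pose P s := (s != z) && le s w.
have Pw : P w by rewrite /P nzw ble_refl.
have [e /andP[nze lew] min_e] := arg_minnP h Pw.
exists e => //; split => // t lete; case: (eqVneq t z) => [-> | nzt]; [by left | right].
by apply: (ble_eq_height lete); apply: min_e; rewrite /P nzt (ble_trans lete lew).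
Qed.

Lemma atom_ideal e : atom e -> ideal (fun t => ~~ le e t).
Proof.
case=> nze atom_e; split; first by apply: contra nze => /ble0E ->.
move=> t u Nle_tu Nleu; apply: contra Nle_tu => leet.
case: (atom_e _ (ble_opl e u)) => [eu0 | eue]; first by move: Nleu; rewrite /ble eu0 eqxx.
by rewrite -eue; apply: ble_op1.
Qed.

Hypothesis si : subdirectly_irreducible op.

(* Every nonzero ideal I induces a nontrivial congruence, which contains the
   monolith; hence the nonzero element w extracted from the monolith lies in I. *)
Lemma si_ideal_core : exists2 w, w != z &
  forall I, ideal I -> (exists2 t, I t & t != z) -> I w.
Proof.
case: si => _ [mu [_ [[x [y [muxy neqxy]]] mu_min]]].
have core I : ideal I -> (exists2 t, I t & t != z) -> I (op x y) && I (op y x).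
  move=> idI [t It nzt]; apply: (mu_min _ (ideal_congruence idI)) => //.
  by exists t, z; rewrite /= opx0 op0x It (proj1 idI); split => //; apply/eqP.
have [xy0 | nz_xy] := eqVneq (op x y) z.
  have nz_yx : op y x != z by apply/eqP => yx0; apply: neqxy; apply: bck_antisym.
  by exists (op y x) => // I idI /(core I idI)/andP[].
by exists (op x y) => // I idI /(core I idI)/andP[].
Qed.

Lemma atom_unique e1 e2 : atom e1 -> atom e2 -> e1 = e2.
Proof.
have [w nzw core_w] := si_ideal_core; have [e atom_e lew] := exists_atom nzw.
suff eq_e e' : atom e' -> e' = e by move=> /eq_e -> /eq_e ->.
move=> atom_e'; apply/eqP/negPn/negP => neqe'e.
suff : ~~ le e w by rewrite lew.
apply: core_w (atom_ideal atom_e) _; exists e'; last exact: atom_e'.1.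
apply/negP => lee'; case: (atom_e'.2 e lee') => [e0 | ee'].
  by move: atom_e.1; rewrite e0 eqxx.
by move: neqe'e; rewrite ee' eqxx.
Qed.

Lemma meet_neq0 x y : x != z -> y != z -> meet x y != z.
Proof.
move=> /exists_atom[e atom_e lex] /exists_atom[e' atom_e' ley].
rewrite -(atom_unique atom_e atom_e') in ley.
apply: contra_neq atom_e.1 => xy0.
by have := ble_meet lex ley; rewrite xy0 => /ble0E.
Qed.

Lemma cover_atom a x : le x a -> x != a ->
  (forall t, le x t -> le t a -> t = x \/ t = a) -> atom (op a x).
Proof.
move=> lexa neqxa cover; split.
  by apply: contra neqxa => /eqP ax0; apply/eqP/ble_anti; rewrite // /ble ax0.
move=> t lext; have leta : le t a := ble_trans lext (ble_opl a x).
have := ble_op2 a lext; rewrite opK // => /cover /(_ (ble_opl a t)) [xt | at_].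
  by right; rewrite -xt opK.
by left; rewrite -(opK leta) at_ opxx.
Qed.

Lemma exists_cover x a : le x a -> x != a ->
  exists c, [/\ le x c, le c a & atom (op a c)].
Proof.
move=> lexa neqxa; pose P s := [&& le x s, le s a & s != a].
have Px : P x by rewrite /P ble_refl lexa.
have [c /and3P[lexc leca neqca] max_c] := arg_maxnP h Px.
exists c; split => //; apply: cover_atom => // t lect leta.
case: (eqVneq t a) => [-> | neqta]; [by right | left].
by apply/esym/ble_eq_height => //; apply: max_c; rewrite /P (ble_trans lexc lect) leta.
Qed.

(* For a lower cover [c] of [a], [op a c] is an atom; as the atom is unique and
   [op a] is injective below [a], [a] has a single lower cover. *)
Lemma down_chain a x y : le x a -> le y a -> le x y || le y x.
Proof.
have [n] := ubnP (h a); elim: n a x y => // n IH a x y /ltnSE lean lexa leya.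
case: (eqVneq x a) => [-> | neqxa]; first by rewrite leya orbT.
case: (eqVneq y a) => [-> | neqya]; first by rewrite lexa.
have [c [lexc leca atom_c]] := exists_cover lexa neqxa.
have [d [leyd leda atom_d]] := exists_cover leya neqya.
have eqcd : c = d by rewrite -(opK leca) (atom_unique atom_c atom_d) opK.
have neqca : c != a by apply: contraNneq atom_c.1 => ->; rewrite opxx.
rewrite -{}eqcd in leyd; apply: (IH c) => //.
exact: leq_trans (height_lt leca neqca) lean.
Qed.

Lemma height_inj_down a : {in down a &, injective h}.
Proof.
move=> s t; rewrite !inE => lesa leta eq_h.
case/orP: (down_chain lesa leta) => [lest | lets].
  by apply: ble_eq_height; rewrite ?eq_h.
by apply/esym/ble_eq_height; rewrite ?eq_h.
Qed.

(* [op a] maps the interval [t, a] bijectively onto [down (op a t)], and [down a]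
   is the union of [down t] and [t, a], which meet in [t]. *)
Lemma height_op_ble a t : le t a -> h (op a t) = h a - h t.
Proof.
move=> leta; pose B := [set s | le t s && le s a].
have cardB : #|down (op a t)| = #|B|.
  have -> : down (op a t) = op a @: B.
    apply/setP => s; rewrite inE; apply/idP/imsetP => [les | [u]].
      have lesa := ble_trans les (ble_opl a t).
      by exists (op a s); rewrite ?opK // inE ble_opl andbT -{1}(opK leta) ble_op2.
    by rewrite inE => /andP[letu _] ->; apply: ble_op2.
  rewrite card_in_imset // => u v; rewrite !inE => /andP[_ leua] /andP[_ leva] eq_op.
  by rewrite -(opK leua) eq_op opK.
have downU : down t :|: B = down a.
  apply/setP => s; rewrite !inE; apply/idP/idP => [/orP[lest | /andP[_ //]] | lesa].
    exact: ble_trans lest leta.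
  by case/orP: (down_chain lesa leta) => -> //; rewrite lesa orbT.
have downI : down t :&: B = [set t].
  apply/setP => s; rewrite !inE; apply/idP/eqP => [/and3P[lest lets _] | ->].
    exact: ble_anti.
  by rewrite ble_refl.
have := cardsUI (down t) B; rewrite downU downI cards1 !heightE cardB.
by have := card_down_gt0 t; have := card_down_gt0 (op a t); rewrite cardB; lia.
Qed.

Lemma height_op x y : h (op x y) = h x - h (meet x y).
Proof. by rewrite op_meet height_op_ble // ble_meetl. Qed.

Lemma height_attained a j : j <= h a -> exists2 t, le t a & h t = j.
Proof.
move=> leja; pose s := map h (enum (down a)).
have uniq_s : uniq s.
  by rewrite map_inj_in_uniq ?enum_uniq // => u v; rewrite !mem_enum; apply: height_inj_down.
have sub_s : {subset s <= iota 0 (h a).+1}.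
  move=> i /mapP[t]; rewrite mem_enum inE => leta ->.
  by rewrite mem_iota add0n ltnS height_le.
have size_s : size (iota 0 (h a).+1) <= size s.
  by rewrite size_iota size_map -cardE heightE; have := card_down_gt0 a; lia.
have [_ eq_s] := uniq_min_size uniq_s sub_s size_s.
have : j \in s by rewrite eq_s mem_iota add0n ltnS.
by case/mapP=> t; rewrite mem_enum inE => leta ->; exists t.
Qed.

Local Notation M := (maximals op z).
Local Notation n := (alg_height op z).

Lemma maximal_ble m y : m \in M -> le m y -> y = m.
Proof. by rewrite inE => /forallP /(_ y) /implyP le_eq /le_eq /eqP. Qed.

Lemma exists_maximal c : exists2 m, m \in M & le c m.
Proof.
have [m lecm max_m] := arg_maxnP h (ble_refl c).
exists m => //; rewrite inE; apply/forallP => y; apply/implyP => lemy.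
apply/contraT => neqym.
by have := max_m y (ble_trans lecm lemy); rewrite /= leqNgt height_lt // eq_sym.
Qed.

Lemma height_le_alg t : h t <= n.
Proof. exact: (@leq_bigmax T (height op z) t). Qed.

Lemma exists_height_alg : exists a, h a = n.
Proof.
have [|a eq_a] := @eq_bigmax T (height op z); last by exists a; rewrite /alg_height eq_a.
by apply/card_gt0P; exists z.
Qed.

Lemma alg_height_gt0 : 0 < n.
Proof.
case: si => /card_gt1P[x [y [_ _ neqxy]]] _.
have [t nzt] : exists t, t != z.
  by case: (eqVneq x z) => [x0 | nzx]; [exists y; rewrite -x0 eq_sym | exists x].
exact: leq_trans (height_gt0 nzt) (height_le_alg t).
Qed.

Lemma meet_incomparable_ble c d c' d' : le c c' -> le d d' ->
  ~~ le c d -> ~~ le d c -> meet c' d' = meet c d.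
Proof.
have below x y x' y' : le x x' -> le y y' -> ~~ le x y -> ~~ le y x -> le (meet x' y') x.
  move=> lexx' leyy' Nlexy Nleyx.
  case/orP: (down_chain lexx' (ble_meetl x' y')) => // lexm.
  have lexy' := ble_trans lexm (ble_meetr x' y').
  by case/orP: (down_chain lexy' leyy') => lexy; move: Nlexy Nleyx; rewrite lexy.
move=> lecc' ledd' Nlecd Nledc; apply: ble_anti.
  apply: ble_meet; first exact: below lecc' ledd' Nlecd Nledc.
  by rewrite meetC; apply: below ledd' lecc' Nledc Nlecd.
by apply: ble_meet; [apply: ble_trans lecc' | apply: ble_trans ledd'];
  rewrite ?ble_meetl ?ble_meetr.
Qed.

Lemma branching_meet_maximals b : b \in branching op z ->
  exists c d, [/\ c \in M, d \in M & meet c d = b].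
Proof.
rewrite inE => /existsP[c /existsP[d /and3P[/andP[neqbc _] /andP[neqbd _] /eqP cdb]]].
have Nlecd : ~~ le c d by apply: contra neqbc => lecd; rewrite -cdb meet_idPl.
have Nledc : ~~ le d c by apply: contra neqbd => ledc; rewrite -cdb meet_idPr.
have [c' Mc' lecc'] := exists_maximal c; have [d' Md' ledd'] := exists_maximal d.
by exists c', d'; rewrite (meet_incomparable_ble lecc' ledd').
Qed.

Lemma meet_cases x y :
  [\/ meet x y = x, meet x y = y | meet x y \in branching op z].
Proof.
have [lexy | Nlexy] := boolP (le x y); first by constructor 1; apply: meet_idPl.
have [leyx | Nleyx] := boolP (le y x); first by constructor 2; apply: meet_idPr.
constructor 3; rewrite inE; apply/existsP; exists x; apply/existsP; exists y.
rewrite /blt ble_meetl ble_meetr eqxx !andbT.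
by apply/andP; split; [apply: contraNneq Nlexy => <- | apply: contraNneq Nleyx => <-];
  rewrite ?ble_meetr ?ble_meetl.
Qed.

Section Subuniverse.
Variable k : nat.
Local Notation Ak := (Ak op z k).
Local Notation S := (Ak :|: M).

Lemma inAk x : (x \in Ak) = (k %| h x).
Proof. by rewrite inE. Qed.

Lemma op_notin_AkM x y : 0 < h (op x y) < k -> h (op x y) < h x -> op x y \notin S.
Proof.
move=> /andP[hxy_gt0 hxy_ltk] hxy_ltx; rewrite inE inAk negb_or; apply/andP; split.
  by apply: contraTN hxy_ltk => /(dvdn_leq hxy_gt0); rewrite leqNgt.
by apply: contraTN hxy_ltx => /maximal_ble /(_ (ble_opl x y)) {2}->; rewrite ltnn.
Qed.

(* For maximal [m \notin Ak]: if [h m < k], take [op y m] with [h y = k], where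
   [0 < h (meet y m)] because [y] and [m] share the atom; otherwise take [op m y]
   with [y <= m] and [h y = h m %/ k * k]. *)
Lemma subuniverse_maximals_Ak :
  0 < k -> k <= n -> is_subuniverse op z S -> M \subset Ak.
Proof.
move=> k_gt0 k_le_n [_ closedS]; apply/subsetP => m Mm; apply: contraT => Akm.
have Sm : m \in S by rewrite inE Mm orbT.
have nzm : m != z by apply: contraNneq Akm => ->; rewrite inAk height0 dvdn0.
have [lt_mk | le_km] := ltnP (h m) k.
  have [a ha] := exists_height_alg.
  have [y _ hy] : exists2 y, le y a & h y = k by apply: height_attained; rewrite ha.
  have nzy : y != z by apply: contraTneq k_gt0 => y0; rewrite -hy y0 height0.
  have Sy : y \in S by rewrite inE inAk hy dvdnn.
  have hmeet_gt0 := height_gt0 (meet_neq0 nzy nzm).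
  have hmeet_le := height_le (ble_meetr y m).
  suff : op y m \notin S by rewrite closedS.
  by apply: op_notin_AkM; rewrite height_op hy; lia.
have [y leym hy] := height_attained (leq_divM (h m) k).
have Sy : y \in S by rewrite inE inAk hy dvdn_mull.
have hmy : h (op m y) = h m %% k by rewrite height_op_ble // hy {1}(divn_eq (h m) k) addKn.
have hmy_gt0 : 0 < h m %% k by rewrite lt0n; apply: contra Akm; rewrite inAk.
suff : op m y \notin S by rewrite closedS.
apply: op_notin_AkM; rewrite hmy ?hmy_gt0 ?ltn_pmod //.
exact: leq_trans (ltn_pmod _ k_gt0) le_km.
Qed.

Lemma subuniverse_branching_Ak :
  is_subuniverse op z S -> M \subset Ak -> branching op z \subset Ak.
Proof.
move=> [_ closedS] MAk; apply/subsetP => b /branching_meet_maximals[c [d [Mc Md cdb]]].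
have Sc : c \in S by rewrite inE Mc orbT.
have Sd : d \in S by rewrite inE Md orbT.
have dvd_c : k %| h c by rewrite -inAk (subsetP MAk).
have le_bc : h b <= h c by rewrite -cdb height_le ?ble_meetl.
have := closedS _ _ Sc Sd; rewrite inE inAk height_op cdb => /orP[dvd_cb | Mcd].
  by rewrite inAk -(dvdn_subr le_bc dvd_c).
have := congr1 h (maximal_ble Mcd (ble_opl c d)); rewrite height_op cdb => hcb.
by rewrite inAk (_ : h b = 0) ?dvdn0 //; lia.
Qed.

Lemma AkM_subuniverse :
  branching op z \subset Ak -> M \subset Ak -> is_subuniverse op z S.
Proof.
move=> BAk MAk; split; first by rewrite inE inAk height0 dvdn0.
have dvd_S x : x \in S -> k %| h x.
  by rewrite inE => /orP[|/(subsetP MAk)]; rewrite inAk.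
move=> x y /dvd_S dvd_x /dvd_S dvd_y; rewrite inE inAk height_op.
case: (meet_cases x y) => [-> | -> | /(subsetP BAk)]; rewrite ?subnn ?dvdn0 //.
  by rewrite dvdn_sub.
by rewrite inAk => dvd_meet; rewrite dvdn_sub.
Qed.

End Subuniverse.
End CBCKAlgebra.

Theorem mainTheorem2 (T : finType) (op : T -> T -> T) (z : T) (k : nat) :
  is_cBCK op z ->
  subdirectly_irreducible op ->
  k %| alg_height op z ->
  k <> 1 ->
  k <> alg_height op z ->
  (is_subuniverse op z (Ak op z k :|: maximals op z) <->
   (branching op z \subset Ak op z k /\ maximals op z \subset Ak op z k)).
Proof.
move=> cbck si dvd_kn _ _; have n_gt0 := alg_height_gt0 cbck si.
have k_gt0 := dvdn_gt0 n_gt0 dvd_kn; have k_le_n := dvdn_leq n_gt0 dvd_kn.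
split => [subS | [BAk MAk]]; last exact: AkM_subuniverse.
have MAk := subuniverse_maximals_Ak cbck si k_gt0 k_le_n subS.
by split => //; apply: subuniverse_branching_Ak.
Qed.
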